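(* $\mathrm{FindWS}_\mathcal{A} \equiv_W \mathrm{Det}_\mathcal{A} \equiv_W \mathrm{C}_{\{0,1\}^\mathbb{N}}$.
   Context: Represented spaces: a represented space is $(X,\delta_X)$ with $\delta_X:\subseteq\mathbb{N}^\mathbb{N}\to X$ a partial surjection. For a partial multivalued $f:\subseteq X\rightrightarrows Y$, a realizer is a partial $F:\subseteq\mathbb{N}^\mathbb{N}\to\mathbb{N}^\mathbb{N}$ with $\delta_Y(F(p))\in f(\delta_X(p))$ whenever $\delta_X(p)\in\mathrm{dom}(f)$. Weihrauch reducibility: $f\leq_W g$ iff there are computable partial $K,H:\subseteq\mathbb{N}^\mathbb{N}\to\mathbb{N}^\mathbb{N}$ such that for every realizer $G$ of $g$, the map $p\mapsto K(\langle p, G(H(p))\rangle)$ is a realizer of $f$; $\equiv_W$ is the induced equivalence. Open subsets of $\{0,1\}^\mathbb{N}$ are named by enumerations of words $w$ with $U=\bigcup w\{0,1\}^\mathbb{N}$; closed sets are named by names of their complements; $\mathcal{A}$ denotes the closed sets with this representation. $\mathrm{C}_{\{0,1\}^\mathbb{N}}$ (closed choice) maps a nonempty closed $A\subseteq\{0,1\}^\mathbb{N}$ to any element of $A$. Games: all games use choice set $\{0,1\}$. A win/lose game has two players (player 1 and player 2), a turn function $d:\{0,1\}^*\to\{1,2\}$ (given as a lookup table), and a winning set $W\subseteq\{0,1\}^\mathbb{N}$ for player 1 (player 2 wins on the complement). A strategy profile is a function $s:\{0,1\}^*\to\{0,1\}$ (identified with an element of $\{0,1\}^\mathbb{N}$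 via a computable bijection $\{0,1\}^*\cong\mathbb{N}$); player $i$'s strategy is its restriction to $d^{-1}(i)$; the induced play $p$ satisfies $p_n=s(p_{<n})$. A strategy of a player is winning if every play consistent with it is won by that player. For a represented pointclass $\Gamma$, $\mathrm{Det}_\Gamma$ takes a win/lose game whose winning set for player 1 is given by a $\Gamma$-name, and outputs any Nash equilibrium, i.e.~any strategy profile in which one of the two strategies is winning. $\mathrm{FindWS}_\Gamma$ is the restriction of $\mathrm{Det}_\Gamma$ to games in which player 1 has a winning strategy. *)

From Stdlib Require Import Arith List.
Import ListNotations.

Definition baire := nat -> nat.

Inductive code : Type :=
| CZero : code
| CSucc : code
| CProj : nat -> code
| COracle : code
| CComp : code -> list code -> code
| CPrec : code -> code -> code
| CMin : code -> code.

Inductive eval (o : baire) : code -> list nat -> nat -> Prop :=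
| ev_zero : forall xs, eval o CZero xs 0
| ev_succ : forall x xs, eval o CSucc (x :: xs) (S x)
| ev_proj : forall i xs v, nth_error xs i = Some v -> eval o (CProj i) xs v
| ev_oracle : forall x xs, eval o COracle (x :: xs) (o x)
| ev_comp : forall f gs xs ys v,
    evals o gs xs ys -> eval o f ys v -> eval o (CComp f gs) xs v
| ev_prec0 : forall f g xs v, eval o f xs v -> eval o (CPrec f g) (0 :: xs) v
| ev_precS : forall f g n xs r v,
    eval o (CPrec f g) (n :: xs) r -> eval o g (n :: r :: xs) v ->
    eval o (CPrec f g) (S n :: xs) v
| ev_min : forall f xs n,
    eval o f (n :: xs) 0 ->
    (forall m, m < n -> exists k, eval o f (m :: xs) (S k)) ->
    eval o (CMin f) xs n
with evals (o : baire) : list code -> list nat -> list nat -> Prop :=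
| evs_nil : forall xs, evals o [] xs []
| evs_cons : forall g gs xs y ys,
    eval o g xs y -> evals o gs xs ys -> evals o (g :: gs) xs (y :: ys).

(* Partial functions on Baire space, as single-valued relations. *)
Definition single_valued (F : baire -> baire -> Prop) : Prop :=
  forall p q1 q2, F p q1 -> F p q2 -> q1 = q2.

Definition computable (F : baire -> baire -> Prop) : Prop :=
  single_valued F /\
  exists e : code, forall p q, F p q -> forall n, eval p e [n] (q n).

Definition pairB (p q : baire) : baire :=
  fun n => if Nat.even n then p (Nat.div2 n) else q (Nat.div2 n).

Record rep_space := {
  rcar : Type;
  rdelta : baire -> rcar -> Prop   (* graph of the partial representation *)
}.

(* Partial multivalued f : X => Y given by its graph; dom f = {x | f x <> empty}. *)
Definition mv (X Y : rep_space) := rcar X -> rcar Y -> Prop.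

Definition realizes (X Y : rep_space) (f : mv X Y) (F : baire -> baire -> Prop) :=
  forall p x, rdelta X p x -> (exists y, f x y) ->
    exists q, F p q /\ exists y, rdelta Y q y /\ f x y.

Definition W_le (X Y : rep_space) (f : mv X Y) (X' Y' : rep_space) (g : mv X' Y') :=
  exists K H : baire -> baire -> Prop,
    computable K /\ computable H /\
    forall G, single_valued G -> realizes X' Y' g G ->
      realizes X Y f (fun p r => exists q s, H p q /\ G q s /\ K (pairB p s) r).

Definition W_eq (X Y : rep_space) (f : mv X Y) (X' Y' : rep_space) (g : mv X' Y') :=
  W_le X Y f X' Y' g /\ W_le X' Y' g X Y f.

(* Computable bijection {0,1}^* ~ nat. *)
Fixpoint word_code (w : list bool) : nat :=
  match w with
  | [] => 0
  | b :: w' => 2 * word_code w' + (if b then 2 else 1)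
  end.

Definition is_prefix (w : list bool) (x : nat -> bool) : Prop :=
  forall i b, nth_error w i = Some b -> x i = b.

Definition bit (b : bool) : nat := if b then 1 else 0.

Definition Cantor : rep_space :=
  {| rcar := nat -> bool;
     rdelta := fun p x => forall n, p n = bit (x n) |}.

(* p enumerates words (p n = 0: no word; p n = S (word_code w): word w);
   it names the open set U = union of the cylinders w{0,1}^N. *)
Definition names_open (p : baire) (U : (nat -> bool) -> Prop) : Prop :=
  forall x, U x <-> exists n w, p n = S (word_code w) /\ is_prefix w x.

Definition names_closed (p : baire) (A : (nat -> bool) -> Prop) : Prop :=
  names_open p (fun x => ~ A x).

Definition ClosedSets : rep_space :=
  {| rcar := (nat -> bool) -> Prop; rdelta := names_closed |}.

Definition closed_choice : mv ClosedSets Cantor := fun A x => A x.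

Inductive player := P1 | P2.

Definition player_code (i : player) : nat := match i with P1 => 1 | P2 => 2 end.

Record game := {
  turn : list bool -> player;
  win1 : (nat -> bool) -> Prop
}.

Definition names_game (p : baire) (G : game) : Prop :=
  exists t a, p = pairB t a /\
    (forall w, t (word_code w) = player_code (turn G w)) /\
    names_closed a (win1 G).

Definition ClosedGames : rep_space := {| rcar := game; rdelta := names_game |}.

Definition profile := list bool -> bool.

Definition Profiles : rep_space :=
  {| rcar := profile;
     rdelta := fun q s => forall w, q (word_code w) = bit (s w) |}.

Definition prefix_of (x : nat -> bool) (n : nat) : list bool := map x (seq 0 n).

Definition consistent (G : game) (i : player) (s : profile) (x : nat -> bool) :=
  forall n, turn G (prefix_of x n) = i -> x n = s (prefix_of x n).

Definition wins (G : game) (i : player) (x : nat -> bool) : Prop :=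
  match i with P1 => win1 G x | P2 => ~ win1 G x end.

Definition winning (G : game) (i : player) (s : profile) : Prop :=
  forall x, consistent G i s x -> wins G i x.

Definition nash (G : game) (s : profile) : Prop :=
  winning G P1 s \/ winning G P2 s.

Definition Det_A : mv ClosedGames Profiles := fun G s => nash G s.

Definition FindWS_A : mv ClosedGames Profiles :=
  fun G s => (exists s', winning G P1 s') /\ nash G s.

(* FindWS trivially reduces to Det, and closed choice reduces to FindWS through the
   one-player game whose winning set is the given closed set: the play of any Nash
   equilibrium lies in it.

   For Det below closed choice, approximate a game with closed winning set W at stage n
   by the clopen game in which player 1 loses once the play has a prefix among the first
   n enumerated words of the complement of W. A profile, coded as a point of Cantor
   space, is bad at stage n if player 1 still has an unrefuted strategy at stage n but
   the profile's player-1 part is refuted, or player 2 wins the stage-n game but the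
   profile's player-2 part does not force this. Badness at stage n depends on finitely
   many bits and is decidable relative to the name, so the never-bad profiles form a
   closed set computable from the name. It is nonempty by determinacy of the finite
   stage games and compactness of Cantor space, and each of its points is a Nash
   equilibrium: if player 2 wins some stage game, the player-2 part wins; otherwise the
   player-1 part is never refuted, hence winning as W is closed. *)

From Stdlib Require Import Arith List Lia Wf_nat Classical ClassicalEpsilon
  FunctionalExtensionality.
Import ListNotations.

Inductive pexp :=
| EVar (i : nat) | EZero | ESucc (e : pexp) | EOra (e : pexp)
| ERec (n b s : pexp).

Fixpoint prim_rec (b : nat) (s : nat -> nat -> nat) (m : nat) : nat :=
  match m with 0 => b | S m' => s m' (prim_rec b s m') end.

(* [ERec n b s] iterates [s] [n] times from [b]; inside [s], variable 0 is the
   counter and variable 1 the accumulator, the outer environment being shifted by 2. *)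
Fixpoint peval (o : baire) (e : pexp) (env : list nat) {struct e} : nat :=
  match e with
  | EVar i => nth i env 0
  | EZero => 0
  | ESucc e => S (peval o e env)
  | EOra e => o (peval o e env)
  | ERec n b s =>
      (fix r (m : nat) : nat :=
         match m with
         | 0 => peval o b env
         | S m' => peval o s (m' :: r m' :: env)
         end) (peval o n env)
  end.

Lemma peval_ERec o n b s env :
  peval o (ERec n b s) env =
  prim_rec (peval o b env) (fun i a => peval o s (i :: a :: env)) (peval o n env).
Proof. simpl. induction (peval o n env); simpl; congruence. Qed.

Lemma prim_rec_ext b s s' m :
  (forall i a, s i a = s' i a) -> prim_rec b s m = prim_rec b s' m.
Proof. intro H; induction m; simpl; congruence. Qed.

Definition proj_codes k := map CProj (seq 0 k).

Fixpoint compile (k : nat) (e : pexp) : code :=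
  match e with
  | EVar i => if i <? k then CProj i else CZero
  | EZero => CZero
  | ESucc e => CComp CSucc [compile k e]
  | EOra e => CComp COracle [compile k e]
  | ERec n b s =>
      CComp (CPrec (compile k b) (compile (S (S k)) s)) (compile k n :: proj_codes k)
  end.

Lemma evals_proj_codes o env : evals o (proj_codes (length env)) env env.
Proof.
  enough (H : forall l j, j + length l = length env -> skipn j env = l ->
            evals o (map CProj (seq j (length l))) env l)
    by (apply (H env 0); reflexivity).
  induction l as [|x l IH]; intros j Hl Hs; simpl; constructor.
  - constructor. replace j with (j + 0) by lia. rewrite <- nth_error_skipn, Hs. reflexivity.
  - apply IH; [simpl in Hl; lia|].
    rewrite <- Nat.add_1_l, <- skipn_skipn, Hs. reflexivity.
Qed.

Theorem compile_correct e o env :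
  eval o (compile (length env) e) env (peval o e env).
Proof.
  revert o env; induction e as [i| |e IH|e IH|n IHn b IHb s IHs]; intros o env; cbn [compile].
  - simpl. destruct (Nat.ltb_spec i (length env)).
    + constructor. now apply nth_error_nth'.
    + rewrite nth_overflow by lia. constructor.
  - constructor.
  - repeat econstructor. apply IH.
  - repeat econstructor. apply IH.
  - econstructor; [constructor; [apply IHn|apply evals_proj_codes]|].
    rewrite peval_ERec. induction (peval o n env) as [|m IHm]; simpl.
    + constructor. apply IHb.
    + econstructor; [exact IHm|]. apply (IHs o (m :: _ :: env)).
Qed.

Lemma computable_pexp (f : baire -> baire) (e : pexp) :
  (forall o n, f o n = peval o e [n]) -> computable (fun o r => r = f o).
Proof.
  intro Hf. split; [intros o r1 r2 -> ->; reflexivity|].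
  exists (compile 1 e). intros o r -> n. rewrite Hf. apply (compile_correct e o [n]).
Qed.

Fixpoint shift (c : nat) (e : pexp) : pexp :=
  match e with
  | EVar i => if i <? c then EVar i else EVar (S i)
  | EZero => EZero
  | ESucc e => ESucc (shift c e)
  | EOra e => EOra (shift c e)
  | ERec n b s => ERec (shift c n) (shift c b) (shift (S (S c)) s)
  end.

Lemma peval_shift e c o env x : c <= length env ->
  peval o (shift c e) (firstn c env ++ x :: skipn c env) = peval o e env.
Proof.
  revert c env; induction e as [i| |e IH|e IH|n IHn b IHb s IHs]; intros c env Hc; cbn [shift].
  - simpl. destruct (Nat.ltb_spec i c); simpl.
    + rewrite app_nth1 by (rewrite length_firstn; lia).
      rewrite nth_firstn. destruct (Nat.ltb_spec i c); [reflexivity|lia].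
    + rewrite app_nth2 by (rewrite length_firstn; lia).
      rewrite length_firstn, Nat.min_l by lia.
      replace (S i - c) with (S (i - c)) by lia. simpl. rewrite nth_skipn. f_equal. lia.
  - reflexivity.
  - simpl; rewrite IH; auto.
  - simpl; rewrite IH; auto.
  - rewrite !peval_ERec, IHn, IHb by auto. apply prim_rec_ext. intros i a.
    apply (IHs (S (S c)) (i :: a :: env)). simpl; lia.
Qed.

Lemma peval_shift0 e o env x : peval o (shift 0 e) (x :: env) = peval o e env.
Proof. apply (peval_shift e 0 o env x). lia. Qed.

Lemma peval_shift1 e o y env x :
  peval o (shift 1 e) (y :: x :: env) = peval o e (y :: env).
Proof. apply (peval_shift e 1 o (y :: env) x). simpl; lia. Qed.

Fixpoint ENat n := match n with 0 => EZero | S n => ESucc (ENat n) end.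
Definition EPred e := ERec e EZero (EVar 0).
Definition EAdd a b := ERec b a (ESucc (EVar 1)).
Definition ESub a b := ERec b a (EPred (EVar 1)).
Definition EMul a b := ERec b EZero (EAdd (EVar 1) (shift 0 (shift 0 a))).
Definition EPow2 e := ERec e (ENat 1) (EAdd (EVar 1) (EVar 1)).
Definition EOdd e := ERec e EZero (ESub (ENat 1) (EVar 1)).
Definition EDiv2 e := ERec e EZero (EAdd (EVar 1) (EOdd (EVar 0))).

Fixpoint testbit (v j : nat) : bool :=
  match j with 0 => Nat.odd v | S j => testbit (Nat.div2 v) j end.

Definition EBit v j := EOdd (ERec j v (EDiv2 (EVar 1))).

Lemma peval_ENat o n env : peval o (ENat n) env = n.
Proof. induction n; simpl; auto. Qed.

Lemma peval_EPred o e env : peval o (EPred e) env = pred (peval o e env).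
Proof. unfold EPred; rewrite peval_ERec. destruct (peval o e env); reflexivity. Qed.

Lemma peval_EAdd o a b env : peval o (EAdd a b) env = peval o a env + peval o b env.
Proof.
  unfold EAdd; rewrite peval_ERec; simpl.
  induction (peval o b env); cbn [prim_rec]; lia.
Qed.

Lemma peval_ESub o a b env : peval o (ESub a b) env = peval o a env - peval o b env.
Proof.
  unfold ESub; rewrite peval_ERec.
  erewrite prim_rec_ext by (intros; rewrite peval_EPred; reflexivity). simpl.
  induction (peval o b env); cbn [prim_rec]; lia.
Qed.

Lemma peval_EMul o a b env : peval o (EMul a b) env = peval o a env * peval o b env.
Proof.
  unfold EMul; rewrite peval_ERec.
  erewrite prim_rec_ext
    by (intros; rewrite peval_EAdd, (peval_shift0 (shift 0 a)), peval_shift0; reflexivity).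
  simpl. induction (peval o b env); cbn [prim_rec]; lia.
Qed.

Lemma peval_EPow2 o e env : peval o (EPow2 e) env = 2 ^ peval o e env.
Proof.
  unfold EPow2; rewrite peval_ERec.
  erewrite prim_rec_ext by (intros; rewrite peval_EAdd; reflexivity). simpl.
  induction (peval o e env); cbn [prim_rec Nat.pow]; lia.
Qed.

Lemma peval_EOdd o e env : peval o (EOdd e) env = Nat.b2n (Nat.odd (peval o e env)).
Proof.
  unfold EOdd; rewrite peval_ERec.
  erewrite prim_rec_ext by (intros; rewrite peval_ESub, peval_ENat; reflexivity). simpl.
  induction (peval o e env) as [|m IH]; cbn [prim_rec]; [reflexivity|].
  rewrite IH, Nat.odd_succ, <- Nat.negb_odd. destruct (Nat.odd m); reflexivity.
Qed.

Lemma peval_EDiv2 o e env : peval o (EDiv2 e) env = Nat.div2 (peval o e env).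
Proof.
  unfold EDiv2; rewrite peval_ERec.
  erewrite prim_rec_ext by (intros; rewrite peval_EAdd, peval_EOdd; reflexivity). simpl.
  induction (peval o e env) as [|m IH]; cbn [prim_rec]; [reflexivity|]. rewrite IH.
  pose proof (Nat.div2_odd m) as Hm. pose proof (Nat.div2_odd (S m)) as H.
  rewrite Nat.odd_succ, <- Nat.negb_odd in H. destruct (Nat.odd m); simpl in *; lia.
Qed.

Lemma peval_EBit o v j env :
  peval o (EBit v j) env = Nat.b2n (testbit (peval o v env) (peval o j env)).
Proof.
  unfold EBit; rewrite peval_EOdd, peval_ERec.
  erewrite prim_rec_ext by (intros; rewrite peval_EDiv2; reflexivity). simpl.
  generalize (peval o v env); induction (peval o j env) as [|m IH]; intro v'; [reflexivity|].
  cbn [testbit]. rewrite <- IH. do 2 f_equal. clear IH.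
  induction m; simpl in *; congruence.
Qed.

Lemma peval_EOra o e env : peval o (EOra e) env = o (peval o e env).
Proof. reflexivity. Qed.
Lemma peval_ESucc o e env : peval o (ESucc e) env = S (peval o e env).
Proof. reflexivity. Qed.
Lemma peval_EVar0 o x env : peval o (EVar 0) (x :: env) = x.
Proof. reflexivity. Qed.
Lemma peval_EVar1 o x y env : peval o (EVar 1) (x :: y :: env) = y.
Proof. reflexivity. Qed.

Ltac peval_simpl :=
  repeat first [ rewrite peval_EAdd | rewrite peval_ESub | rewrite peval_EMul
               | rewrite peval_EPow2 | rewrite peval_ENat | rewrite peval_EBit
               | rewrite peval_EOra | rewrite peval_ESucc | rewrite peval_EVar0
               | rewrite peval_EVar1 | rewrite peval_shift0 ].

Definition holds o e env := peval o e env <> 0.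

Definition ENot a := ESub (ENat 1) a.
Definition EAnd a b := EMul a b.
Definition EOr a b := EAdd a b.
Definition EImp a b := EOr (ENot a) b.
Definition EEq a b := ENot (EAdd (ESub a b) (ESub b a)).
Definition EEx n body := ERec n EZero (EOr (EVar 1) (shift 1 body)).
Definition EAll n body := ENot (EEx n (ENot body)).

Lemma holds_ENot o a env : holds o (ENot a) env <-> ~ holds o a env.
Proof. unfold holds, ENot; rewrite peval_ESub, peval_ENat. lia. Qed.
Lemma holds_EAnd o a b env : holds o (EAnd a b) env <-> holds o a env /\ holds o b env.
Proof. unfold holds, EAnd; rewrite peval_EMul, Nat.mul_eq_0. tauto. Qed.
Lemma holds_EOr o a b env : holds o (EOr a b) env <-> holds o a env \/ holds o b env.
Proof. unfold holds, EOr; rewrite peval_EAdd. lia. Qed.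
Lemma holds_EImp o a b env : holds o (EImp a b) env <-> (holds o a env -> holds o b env).
Proof. unfold EImp; rewrite holds_EOr, holds_ENot. unfold holds. lia. Qed.
Lemma holds_EEq o a b env : holds o (EEq a b) env <-> peval o a env = peval o b env.
Proof. unfold EEq; rewrite holds_ENot; unfold holds; rewrite peval_EAdd, !peval_ESub. lia. Qed.

Lemma holds_EEx o n body env :
  holds o (EEx n body) env <-> exists i, i < peval o n env /\ holds o body (i :: env).
Proof.
  unfold EEx, holds at 1; rewrite peval_ERec.
  erewrite prim_rec_ext by (intros; unfold EOr; rewrite peval_EAdd, peval_shift1; reflexivity).
  simpl. unfold holds. induction (peval o n env) as [|m IH]; cbn [prim_rec].
  - split; [lia|intros [i [Hi _]]; lia].
  - assert (Hplus : forall a b, a + b <> 0 <-> a <> 0 \/ b <> 0) by lia.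
    rewrite Hplus, IH. split.
    + intros [[i [Hi H]]|H]; [exists i|exists m]; split; auto; lia.
    + intros [i [Hi H]]. destruct (Nat.eq_dec i m); [subst; tauto|].
      left; exists i; split; auto; lia.
Qed.

Lemma holds_EAll o n body env :
  holds o (EAll n body) env <-> forall i, i < peval o n env -> holds o body (i :: env).
Proof.
  unfold EAll; rewrite holds_ENot, holds_EEx.
  setoid_rewrite holds_ENot. unfold holds. split.
  - intros H i Hi. intro E. apply H. eauto.
  - intros H [i [Hi Hn]]. exact (Hn (H i Hi)).
Qed.

Fixpoint word_value (w : list bool) : nat :=
  match w with [] => 0 | b :: w => Nat.b2n b + 2 * word_value w end.

Lemma pow2_pos n : 1 <= 2 ^ n.
Proof. induction n; simpl; lia. Qed.

Lemma word_code_value w : word_code w = 2 ^ length w - 1 + word_value w.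
Proof.
  induction w as [|b w IH]; simpl; [reflexivity|].
  pose proof (pow2_pos (length w)). rewrite IH. destruct b; simpl; lia.
Qed.

Lemma word_value_lt w : word_value w < 2 ^ length w.
Proof. induction w as [|b w IH]; simpl; [lia|]. destruct b; simpl; lia. Qed.

Lemma word_code_inj_length p q x y : x < 2 ^ p -> y < 2 ^ q ->
  2 ^ p - 1 + x = 2 ^ q - 1 + y -> p = q /\ x = y.
Proof.
  intros Hx Hy E. pose proof (pow2_pos p). pose proof (pow2_pos q).
  destruct (Nat.lt_trichotomy p q) as [Hpq|[->|Hpq]]; [|lia|].
  - pose proof (Nat.pow_le_mono_r 2 (S p) q ltac:(lia) Hpq). simpl in *. lia.
  - pose proof (Nat.pow_le_mono_r 2 (S q) p ltac:(lia) Hpq). simpl in *. lia.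
Qed.

Lemma testbit_word_value w j : testbit (word_value w) j = nth j w false.
Proof.
  revert j; induction w as [|b w IH]; intro j.
  - cbn [word_value]. destruct j; [reflexivity|]. cbn [nth].
    induction j; cbn [testbit]; auto.
  - destruct j; cbn [testbit word_value nth].
    + rewrite Nat.odd_add_mul_2. destruct b; reflexivity.
    + rewrite <- IH. f_equal. destruct b; cbn [Nat.b2n].
      * apply Nat.div2_succ_double.
      * apply Nat.div2_double.
Qed.

Lemma word_value_app l b : word_value (l ++ [b]) = word_value l + Nat.b2n b * 2 ^ length l.
Proof. induction l as [|c l IH]; simpl; [destruct b; simpl; lia|]. rewrite IH. lia. Qed.

Lemma prefix_of_S y n : prefix_of y (S n) = prefix_of y n ++ [y n].
Proof. unfold prefix_of. rewrite seq_S, map_app. reflexivity. Qed.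

Lemma length_prefix_of y n : length (prefix_of y n) = n.
Proof. unfold prefix_of. rewrite length_map, length_seq. reflexivity. Qed.

Lemma nth_prefix_of y n j : j < n -> nth j (prefix_of y n) false = y j.
Proof.
  intro H. unfold prefix_of.
  rewrite nth_indep with (d' := y 0) by (rewrite length_map, length_seq; lia).
  rewrite map_nth, seq_nth by lia. reflexivity.
Qed.

Lemma prefix_of_ext y y' i :
  (forall j, j < i -> y j = y' j) -> prefix_of y i = prefix_of y' i.
Proof.
  intro H. apply map_ext_in. intros j Hj. apply in_seq in Hj. apply H. lia.
Qed.

Lemma firstn_prefix_of y i k : i <= k -> firstn i (prefix_of y k) = prefix_of y i.
Proof.
  intro H. unfold prefix_of. rewrite firstn_map. f_equal.
  replace k with (i + (k - i)) by lia.
  rewrite seq_app, firstn_app, length_seq, Nat.sub_diag, firstn_O, app_nil_r.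
  apply firstn_all2. rewrite length_seq. lia.
Qed.

Lemma is_prefix_iff w x : is_prefix w x <-> prefix_of x (length w) = w.
Proof.
  split.
  - intro H. apply nth_ext with (d := false) (d' := false); rewrite length_prefix_of; auto.
    intros j Hj. rewrite nth_prefix_of by auto. apply H, nth_error_nth', Hj.
  - intros H i b Hib. assert (i < length w) by (apply nth_error_Some; congruence).
    apply nth_error_nth with (d := false) in Hib.
    rewrite <- H, nth_prefix_of in Hib; auto.
Qed.

Lemma is_prefix_prefix_of x n : is_prefix (prefix_of x n) x.
Proof. apply is_prefix_iff. rewrite length_prefix_of. reflexivity. Qed.

Lemma testbit_prefix_value y n j : j < n -> testbit (word_value (prefix_of y n)) j = y j.
Proof. intro; rewrite testbit_word_value, nth_prefix_of; auto. Qed.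

Lemma prefix_value_testbit u n : u < 2 ^ n -> word_value (prefix_of (testbit u) n) = u.
Proof.
  revert u; induction n; intros u H; simpl in *; [lia|].
  unfold prefix_of. simpl. rewrite <- seq_shift, map_map. simpl.
  change (map (fun x => testbit (Nat.div2 u) x) (seq 0 n))
    with (prefix_of (testbit (Nat.div2 u)) n).
  pose proof (Nat.div2_odd u).
  rewrite IHn; [lia|]. destruct (Nat.odd u); simpl in *; lia.
Qed.

Lemma prefix_value_lt y n : word_value (prefix_of y n) < 2 ^ n.
Proof. rewrite <- (length_prefix_of y n) at 2. apply word_value_lt. Qed.

Lemma word_code_prefix_lt y i n : i < n -> word_code (prefix_of y i) < 2 ^ n - 1.
Proof.
  intro H. rewrite word_code_value, length_prefix_of. pose proof (prefix_value_lt y i).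
  pose proof (Nat.pow_le_mono_r 2 (S i) n ltac:(lia) H). simpl in *. lia.
Qed.

Fixpoint play_prefix (f : nat -> list bool -> bool) (n : nat) : list bool :=
  match n with 0 => [] | S n => play_prefix f n ++ [f n (play_prefix f n)] end.

Definition play (f : nat -> list bool -> bool) (n : nat) : bool := f n (play_prefix f n).

Lemma prefix_of_play f n : prefix_of (play f) n = play_prefix f n.
Proof. induction n; simpl; [reflexivity|]. rewrite prefix_of_S, IHn. reflexivity. Qed.

Lemma length_play_prefix f n : length (play_prefix f n) = n.
Proof. rewrite <- prefix_of_play. apply length_prefix_of. Qed.

Definition profile_of (x : nat -> bool) : profile := fun w => x (word_code w).

Fixpoint decode_fuel (fuel N : nat) : list bool :=
  match fuel, N with
  | S fuel, S N => Nat.odd N :: decode_fuel fuel (Nat.div2 N)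
  | _, _ => []
  end.

Definition decode N := decode_fuel N N.

Lemma decode_word_code w : decode (word_code w) = w.
Proof.
  enough (H : forall fuel, word_code w <= fuel -> decode_fuel fuel (word_code w) = w)
    by (apply H; lia).
  induction w as [|b w IH]; intros fuel Hf; [destruct fuel; reflexivity|].
  assert (E : word_code (b :: w) = S (Nat.b2n b + 2 * word_code w))
    by (cbn [word_code]; destruct b; cbn [Nat.b2n]; lia).
  rewrite E in *. destruct fuel as [|fuel]; [lia|]. cbn [decode_fuel].
  rewrite Nat.odd_add_mul_2. f_equal; [destruct b; reflexivity|].
  replace (Nat.div2 (Nat.b2n b + 2 * word_code w)) with (word_code w); [apply IH; lia|].
  destruct b; cbn [Nat.b2n]; symmetry; [apply Nat.div2_succ_double|apply Nat.div2_double].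
Qed.

Definition seq_of_profile (s : profile) : nat -> bool := fun N => s (decode N).

Lemma profile_of_seq_of_profile s : profile_of (seq_of_profile s) = s.
Proof.
  apply functional_extensionality. intro w.
  unfold profile_of, seq_of_profile. rewrite decode_word_code. reflexivity.
Qed.

(* Stage [n] approximation of a game whose winning set is named by [a]:
   only the first [n] enumerated words of the complement and plays of length [n]
   are looked at. *)
Section Stages.
Variables (G : game) (a : baire).

Definition consistent_upto (who : player) (s : profile) (y : nat -> bool) n :=
  forall i, i < n -> turn G (prefix_of y i) = who -> y i = s (prefix_of y i).

Definition leaves_by (y : nat -> bool) n :=
  exists m, m < n /\ exists i, i < S n /\ a m = S (word_code (prefix_of y i)).

Definition refuted_by (s : profile) n :=
  exists y, consistent_upto P1 s y n /\ leaves_by y n.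

Definition forces_exit (s : profile) n :=
  forall y, consistent_upto P2 s y n -> leaves_by y n.

Definition all_refuted n := forall s, refuted_by s n.

Definition bad (x : nat -> bool) n :=
  (~ all_refuted n /\ refuted_by (profile_of x) n) \/
  (all_refuted n /\ ~ forces_exit (profile_of x) n).

Lemma leaves_by_mono y n n' : leaves_by y n -> n <= n' -> leaves_by y n'.
Proof.
  intros [m [Hm [i [Hi E]]]] H. exists m; split; [lia|]. exists i; split; [lia|auto].
Qed.

Lemma leaves_by_ext y y' n :
  (forall j, j < n -> y j = y' j) -> leaves_by y n -> leaves_by y' n.
Proof.
  intros H [m [Hm [i [Hi E]]]]. exists m; split; auto. exists i; split; auto.
  rewrite <- (prefix_of_ext y y' i); auto. intros; apply H; lia.
Qed.

Lemma consistent_upto_ext who s s' y n :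
  (forall w, turn G w = who -> s w = s' w) ->
  consistent_upto who s y n -> consistent_upto who s' y n.
Proof. intros H Hc i Hi Ht. rewrite <- H by auto. apply Hc; auto. Qed.

Lemma refuted_by_mono s n n' : refuted_by s n -> n <= n' -> refuted_by s n'.
Proof.
  intros [y [Hc Hl]] Hn.
  set (f := fun i w => if i <? n then y i else s w).
  assert (Hy : forall j, j < n -> play f j = y j).
  { intros j Hj. unfold play, f. destruct (Nat.ltb_spec j n); [reflexivity|lia]. }
  exists (play f). split.
  - intros i Hi Ht. unfold play at 1, f at 1. rewrite <- prefix_of_play.
    destruct (Nat.ltb_spec i n); [|reflexivity].
    rewrite (prefix_of_ext _ y) in * by (intros; apply Hy; lia). auto.
  - apply leaves_by_mono with n; auto. apply leaves_by_ext with y; auto.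
    intros; symmetry; auto.
Qed.

Lemma forces_exit_mono s n n' : forces_exit s n -> n <= n' -> forces_exit s n'.
Proof.
  intros H Hn y Hc. apply leaves_by_mono with n; auto.
  apply H. intros i Hi. apply Hc. lia.
Qed.

Lemma all_refuted_mono n n' : all_refuted n -> n <= n' -> all_refuted n'.
Proof. intros H Hn s. eapply refuted_by_mono; eauto. Qed.

Lemma refuted_by_ext s s' n :
  (forall w, turn G w = P1 -> s w = s' w) -> refuted_by s n -> refuted_by s' n.
Proof. intros H [y [Hc Hl]]. exists y; split; auto. eapply consistent_upto_ext; eauto. Qed.

Lemma forces_exit_ext s s' n :
  (forall w, turn G w = P2 -> s w = s' w) -> forces_exit s n -> forces_exit s' n.
Proof.
  intros H Hf y Hc. apply Hf. eapply consistent_upto_ext; [|eauto].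
  intros; symmetry; auto.
Qed.
End Stages.

Section FiniteDeterminacy.
Variables (G : game) (a : baire) (n : nat).

Definition word_leaves (w : list bool) :=
  exists m, m < n /\ exists i, i < S n /\ a m = S (word_code (firstn i w)).

Fixpoint p2_forces_from (d : nat) (w : list bool) : Prop :=
  match d with
  | 0 => word_leaves w
  | S d =>
      match turn G w with
      | P1 => p2_forces_from d (w ++ [true]) /\ p2_forces_from d (w ++ [false])
      | P2 => p2_forces_from d (w ++ [true]) \/ p2_forces_from d (w ++ [false])
      end
  end.

Definition p2_move (w : list bool) : bool :=
  if excluded_middle_informative (p2_forces_from (n - S (length w)) (w ++ [true]))
  then true else false.

Definition p1_move (w : list bool) : bool := negb (p2_move w).

Lemma word_leaves_prefix_of y : word_leaves (prefix_of y n) <-> leaves_by a y n.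
Proof.
  unfold word_leaves, leaves_by.
  split; intros [m [Hm [i [Hi E]]]]; exists m; split; auto; exists i; split; auto;
    rewrite firstn_prefix_of in * by lia; auto.
Qed.

Lemma p2_move_forces d k y : k + d = n -> p2_forces_from d (prefix_of y k) ->
  (forall i, k <= i < n -> turn G (prefix_of y i) = P2 -> y i = p2_move (prefix_of y i)) ->
  word_leaves (prefix_of y n).
Proof.
  revert k; induction d as [|d IH]; intros k Hk Hw Hc; simpl in Hw.
  - replace n with k by lia. auto.
  - apply (IH (S k)); [lia| |intros; apply Hc; auto; lia]. rewrite prefix_of_S.
    destruct (turn G (prefix_of y k)) eqn:T.
    + destruct (y k); tauto.
    + rewrite Hc by (auto; lia). unfold p2_move. rewrite length_prefix_of.
      replace (n - S k) with d by lia.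
      destruct (excluded_middle_informative (p2_forces_from d (prefix_of y k ++ [true])));
        tauto.
Qed.

Lemma p1_move_avoids d k y : k + d = n -> ~ p2_forces_from d (prefix_of y k) ->
  (forall i, k <= i < n -> turn G (prefix_of y i) = P1 -> y i = p1_move (prefix_of y i)) ->
  ~ word_leaves (prefix_of y n).
Proof.
  revert k; induction d as [|d IH]; intros k Hk Hw Hc; simpl in Hw.
  - replace n with k by lia. auto.
  - apply (IH (S k)); [lia| |intros; apply Hc; auto; lia]. rewrite prefix_of_S.
    destruct (turn G (prefix_of y k)) eqn:T.
    + rewrite Hc by (auto; lia). unfold p1_move, p2_move. rewrite length_prefix_of.
      replace (n - S k) with d by lia.
      destruct (excluded_middle_informative (p2_forces_from d (prefix_of y k ++ [true])));
        simpl; tauto.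
    + destruct (y k); tauto.
Qed.

Lemma finite_determinacy :
  (exists t, forces_exit G a t n) \/ (exists s, ~ refuted_by G a s n).
Proof.
  destruct (classic (p2_forces_from n [])) as [H|H];
    [left; exists p2_move|right; exists p1_move].
  - intros y Hc. apply word_leaves_prefix_of, (p2_move_forces n 0); auto.
    intros i Hi Ht. apply Hc; auto. lia.
  - intros [y [Hc Hl]]. apply word_leaves_prefix_of in Hl. revert Hl.
    apply (p1_move_avoids n 0); auto. intros i Hi Ht. apply Hc; auto. lia.
Qed.
End FiniteDeterminacy.

Lemma unrefuted_below G a k0 : (forall k, k < k0 -> ~ all_refuted G a k) ->
  exists s, forall k, k < k0 -> ~ refuted_by G a s k.
Proof.
  destruct k0 as [|k0]; intro H; [exists (fun _ => true); intros; lia|].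
  destruct (not_all_ex_not _ _ (H k0 (Nat.lt_succ_diag_r k0))) as [s Hs].
  exists s. intros k Hk Hr. apply Hs. apply refuted_by_mono with k; auto; lia.
Qed.

Lemma exists_never_bad_upto G a N : exists x, forall k, k <= N -> ~ bad G a x k.
Proof.
  destruct (classic (exists k, all_refuted G a k /\ k <= N)) as [[k Hk]|Hnone].
  - destruct (dec_inh_nat_subset_has_unique_least_element (all_refuted G a)
                (fun k => classic _) (ex_intro _ k (proj1 Hk))) as [k0 [[Hk0 Hmin] _]].
    destruct (finite_determinacy G a k0) as [[t Ht]|[s Hs]]; [|exfalso; exact (Hs (Hk0 s))].
    destruct (unrefuted_below G a k0) as [s1 Hs1].
    { intros j Hj Hr. specialize (Hmin j Hr). lia. }
    set (c := fun w => match turn G w with P1 => s1 w | P2 => t w end).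
    exists (seq_of_profile c). unfold bad. rewrite profile_of_seq_of_profile.
    intros j Hj [[Hna Hr]|[Ha Hf]].
    + assert (j < k0).
      { destruct (Nat.lt_ge_cases j k0); auto. exfalso. eauto using all_refuted_mono. }
      apply (Hs1 j); auto. apply refuted_by_ext with c; auto.
      intros w Hw. unfold c. rewrite Hw. reflexivity.
    + apply Hf, forces_exit_ext with t; [|apply forces_exit_mono with k0; auto].
      intros w Hw. unfold c. rewrite Hw. reflexivity.
  - destruct (unrefuted_below G a (S N)) as [s Hs].
    { intros k Hk Hr. apply Hnone. exists k; split; auto; lia. }
    exists (seq_of_profile s). unfold bad. rewrite profile_of_seq_of_profile.
    intros k Hk [[_ Hr]|[Ha _]]; [apply (Hs k); auto; lia|].
    apply Hnone. eauto.
Qed.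

Lemma cantor_compactness (P : nat -> (nat -> bool) -> Prop) (L : nat -> nat) :
  (forall k x x', prefix_of x (L k) = prefix_of x' (L k) -> P k x -> P k x') ->
  (forall N, exists x, forall k, k <= N -> P k x) -> exists x, forall k, P k x.
Proof.
  intros Hlocal Hfin.
  set (extendible := fun l : list bool =>
         forall N, exists x, prefix_of x (length l) = l /\ forall k, k <= N -> P k x).
  assert (Hstep : forall l, extendible l ->
                    extendible (l ++ [true]) \/ extendible (l ++ [false])).
  { intros l Hl. apply NNPP. intros [H1 H2]%not_or_and.
    destruct (not_all_ex_not _ _ H1) as [N1 HN1].
    destruct (not_all_ex_not _ _ H2) as [N2 HN2].
    destruct (Hl (Nat.max N1 N2)) as [x [Hx HP]].
    assert (Hpx : prefix_of x (length (l ++ [x (length l)])) = l ++ [x (length l)])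
      by (rewrite length_app, Nat.add_1_r, prefix_of_S, Hx; reflexivity).
    destruct (x (length l)); [apply HN1|apply HN2];
      exists x; split; auto; intros k Hk; apply HP; lia. }
  set (f := fun (_ : nat) l =>
         if excluded_middle_informative (extendible (l ++ [true])) then true else false).
  assert (Hf : forall n, extendible (play_prefix f n)).
  { induction n as [|n IH]; [intro N; destruct (Hfin N) as [x Hx]; exists x; auto|].
    simpl. unfold f at 2.
    destruct (excluded_middle_informative (extendible (play_prefix f n ++ [true])));
      auto. destruct (Hstep _ IH); tauto. }
  exists (play f). intro k. destruct (Hf (L k) k) as [x [Hx HP]].
  rewrite <- prefix_of_play, length_prefix_of in Hx.
  apply Hlocal with x; auto.
Qed.

Lemma nash_of_never_bad G a x : names_closed a (win1 G) ->
  (forall n, ~ bad G a x n) -> nash G (profile_of x).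
Proof.
  intros Ha H. destruct (classic (exists n0, all_refuted G a n0)) as [[n0 Hn0]|Hnone].
  - right. intros y Hc Hwin.
    assert (Hf : forces_exit G a (profile_of x) n0)
      by (apply NNPP; intro Hf; apply (H n0); right; auto).
    destruct (Hf y) as [m [_ [i [_ E]]]]; [intros j _ Ht; apply Hc; auto|].
    apply (proj2 (Ha y)); auto. exists m, (prefix_of y i). split; auto.
    apply is_prefix_prefix_of.
  - left. intros y Hc. apply NNPP. intros [m [w [E Hp]]]%(proj1 (Ha y)).
    apply is_prefix_iff in Hp.
    apply (H (S m + length w)). left. split; [intro; apply Hnone; eauto|].
    exists y. split; [intros i _ Ht; apply Hc; auto|].
    exists m. split; [lia|]. exists (length w). split; [lia|]. rewrite Hp. exact E.
Qed.

Fixpoint low_bits (u i : nat) : nat :=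
  match i with 0 => 0 | S i => low_bits u i + Nat.b2n (testbit u i) * 2 ^ i end.

Definition prefix_code (u i : nat) : nat := 2 ^ i - 1 + low_bits u i.

(* Arithmetic versions of the stage predicates, read off a game name [o]:
   [u < 2 ^ n] codes a play prefix of length [n] by its bits, and
   [v < 2 ^ (2 ^ n - 1)] codes a profile on the words of length [< n], bit [word_code w]
   being the move at [w]. *)
Definition consistent_arith (o : baire) (who v u n : nat) :=
  forall i, i < n -> o (2 * prefix_code u i) = who ->
    Nat.b2n (testbit u i) = Nat.b2n (testbit v (prefix_code u i)).

Definition leaves_arith (o : baire) (u n : nat) :=
  exists m, m < n /\ exists i, i < S n /\ o (2 * m + 1) = S (prefix_code u i).

Definition refuted_arith o v n :=
  exists u, u < 2 ^ n /\ consistent_arith o 1 v u n /\ leaves_arith o u n.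

Definition forces_arith o v n :=
  forall u, u < 2 ^ n -> consistent_arith o 2 v u n -> leaves_arith o u n.

Definition all_refuted_arith o n := forall v, v < 2 ^ (2 ^ n - 1) -> refuted_arith o v n.

Definition bad_arith o n v :=
  (~ all_refuted_arith o n /\ refuted_arith o v n) \/
  (all_refuted_arith o n /\ ~ forces_arith o v n).

Definition bad_word_arith o N :=
  exists n, n < S N /\ exists v, v < 2 ^ (2 ^ n - 1) /\
    N = 2 ^ (2 ^ n - 1) - 1 + v /\ bad_arith o n v.

Lemma bounded_forall_iff (b : nat) (P Q : nat -> Prop) : (forall i, i < b -> (P i <-> Q i)) ->
  ((forall i, i < b -> P i) <-> (forall i, i < b -> Q i)).
Proof. intro H; split; intros H' i Hi; apply H; auto. Qed.

Lemma bounded_exists_iff (b : nat) (P Q : nat -> Prop) : (forall i, i < b -> (P i <-> Q i)) ->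
  ((exists i, i < b /\ P i) <-> (exists i, i < b /\ Q i)).
Proof. intro H; split; intros [i [Hi H']]; exists i; split; auto; apply H; auto. Qed.

Definition ELowBits u i :=
  ERec i EZero (EAdd (EVar 1) (EMul (EBit (shift 0 (shift 0 u)) (EVar 0)) (EPow2 (EVar 0)))).

Lemma peval_ELowBits o u i env :
  peval o (ELowBits u i) env = low_bits (peval o u env) (peval o i env).
Proof.
  unfold ELowBits. rewrite peval_ERec.
  induction (peval o i env) as [|k IH]; cbn [prim_rec low_bits]; [reflexivity|].
  rewrite IH. peval_simpl. reflexivity.
Qed.

Definition EPrefixCode u i := EAdd (ESub (EPow2 i) (ENat 1)) (ELowBits u i).

Lemma peval_EPrefixCode o u i env :
  peval o (EPrefixCode u i) env = prefix_code (peval o u env) (peval o i env).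
Proof. unfold EPrefixCode. peval_simpl. rewrite peval_ELowBits. reflexivity. Qed.

Ltac peval_simpl_codes :=
  repeat (peval_simpl; rewrite ?peval_EPrefixCode, ?peval_shift0).

Definition EConsistent who v u n :=
  EAll n (EImp (EEq (EOra (EMul (ENat 2) (EPrefixCode (shift 0 u) (EVar 0)))) (ENat who))
             (EEq (EBit (shift 0 u) (EVar 0))
                  (EBit (shift 0 v) (EPrefixCode (shift 0 u) (EVar 0))))).

Lemma holds_EConsistent o who v u n env : holds o (EConsistent who v u n) env <->
  consistent_arith o who (peval o v env) (peval o u env) (peval o n env).
Proof.
  unfold EConsistent, consistent_arith. rewrite holds_EAll.
  apply bounded_forall_iff. intros i _.
  rewrite holds_EImp, !holds_EEq. peval_simpl_codes. tauto.
Qed.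

Definition ELeaves u n :=
  EEx n (EEx (ESucc (shift 0 n))
    (EEq (EOra (EAdd (EMul (ENat 2) (EVar 1)) (ENat 1)))
         (ESucc (EPrefixCode (shift 0 (shift 0 u)) (EVar 0))))).

Lemma holds_ELeaves o u n env :
  holds o (ELeaves u n) env <-> leaves_arith o (peval o u env) (peval o n env).
Proof.
  unfold ELeaves, leaves_arith. rewrite holds_EEx.
  apply bounded_exists_iff. intros m _.
  rewrite holds_EEx. peval_simpl. apply bounded_exists_iff. intros i _.
  rewrite holds_EEq. peval_simpl_codes. tauto.
Qed.

Definition ERefuted v n :=
  EEx (EPow2 n) (EAnd (EConsistent 1 (shift 0 v) (EVar 0) (shift 0 n))
                      (ELeaves (EVar 0) (shift 0 n))).

Lemma holds_ERefuted o v n env :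
  holds o (ERefuted v n) env <-> refuted_arith o (peval o v env) (peval o n env).
Proof.
  unfold ERefuted, refuted_arith. rewrite holds_EEx. peval_simpl.
  apply bounded_exists_iff. intros u _.
  rewrite holds_EAnd, holds_EConsistent, holds_ELeaves. peval_simpl. tauto.
Qed.

Definition EForces v n :=
  EAll (EPow2 n) (EImp (EConsistent 2 (shift 0 v) (EVar 0) (shift 0 n))
                       (ELeaves (EVar 0) (shift 0 n))).

Lemma holds_EForces o v n env :
  holds o (EForces v n) env <-> forces_arith o (peval o v env) (peval o n env).
Proof.
  unfold EForces, forces_arith. rewrite holds_EAll. peval_simpl.
  apply bounded_forall_iff. intros u _.
  rewrite holds_EImp, holds_EConsistent, holds_ELeaves. peval_simpl. tauto.
Qed.

Definition EAllRefuted n :=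
  EAll (EPow2 (ESub (EPow2 n) (ENat 1))) (ERefuted (EVar 0) (shift 0 n)).

Lemma holds_EAllRefuted o n env :
  holds o (EAllRefuted n) env <-> all_refuted_arith o (peval o n env).
Proof.
  unfold EAllRefuted, all_refuted_arith. rewrite holds_EAll. peval_simpl.
  apply bounded_forall_iff. intros v _. rewrite holds_ERefuted. peval_simpl. tauto.
Qed.

Definition EBad n v :=
  EOr (EAnd (ENot (EAllRefuted n)) (ERefuted v n)) (EAnd (EAllRefuted n) (ENot (EForces v n))).

Lemma holds_EBad o n v env :
  holds o (EBad n v) env <-> bad_arith o (peval o n env) (peval o v env).
Proof.
  unfold EBad, bad_arith.
  rewrite holds_EOr, !holds_EAnd, !holds_ENot.
  rewrite holds_EAllRefuted, holds_ERefuted, holds_EForces. tauto.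
Qed.

Definition EBadWord N :=
  EEx (ESucc N) (EEx (EPow2 (ESub (EPow2 (EVar 0)) (ENat 1)))
    (EAnd (EEq (shift 0 (shift 0 N))
               (EAdd (ESub (EPow2 (ESub (EPow2 (EVar 1)) (ENat 1))) (ENat 1)) (EVar 0)))
          (EBad (EVar 1) (EVar 0)))).

Lemma holds_EBadWord o N env : holds o (EBadWord N) env <-> bad_word_arith o (peval o N env).
Proof.
  unfold EBadWord, bad_word_arith. rewrite holds_EEx. peval_simpl.
  apply bounded_exists_iff. intros n _.
  rewrite holds_EEx. peval_simpl. apply bounded_exists_iff. intros v _.
  rewrite holds_EAnd, holds_EEq, holds_EBad. peval_simpl. tauto.
Qed.

(* Enumerates [S N] for each code [N] of a bad word (padding with [0]): a name of
   the closed set of never-bad points. *)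
Definition EBadWordName := EMul (ENot (ENot (EBadWord (EVar 0)))) (ESucc (EVar 0)).

Definition bad_word_name (o : baire) : baire := fun N => peval o EBadWordName [N].

Lemma bad_word_name_spec o N m : bad_word_name o N = S m <-> bad_word_arith o N /\ m = N.
Proof.
  pose proof (holds_EBadWord o (EVar 0) [N]) as H. unfold holds in H. rewrite peval_EVar0 in H.
  unfold bad_word_name, EBadWordName, ENot.
  rewrite peval_EMul, peval_ESucc, peval_EVar0, !peval_ESub, !peval_ENat.
  destruct (Nat.eq_dec (peval o (EBadWord (EVar 0)) [N]) 0) as [E|E].
  - rewrite E. split; [discriminate|]. intros [Hb _]. exfalso. exact (proj2 H Hb E).
  - replace (1 - (1 - _)) with 1 by lia. split; [intro Hm|intros [_ ->]]; [|lia].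
    split; [apply H; auto|lia].
Qed.

Definition head_value (x : nat -> bool) n := word_value (prefix_of x (2 ^ n - 1)).

Lemma head_value_lt x n : head_value x n < 2 ^ (2 ^ n - 1).
Proof. apply prefix_value_lt. Qed.

Lemma head_value_testbit v n : v < 2 ^ (2 ^ n - 1) -> head_value (testbit v) n = v.
Proof. apply prefix_value_testbit. Qed.

Lemma low_bits_prefix_value y n i : i <= n ->
  low_bits (word_value (prefix_of y n)) i = word_value (prefix_of y i).
Proof.
  induction i as [|i IH]; intro H; cbn [low_bits]; [reflexivity|].
  rewrite IH, testbit_prefix_value, prefix_of_S, word_value_app, length_prefix_of by lia.
  reflexivity.
Qed.

Lemma prefix_code_prefix_value y n i : i <= n ->
  prefix_code (word_value (prefix_of y n)) i = word_code (prefix_of y i).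
Proof.
  intro H. unfold prefix_code.
  rewrite low_bits_prefix_value, word_code_value, length_prefix_of; auto.
Qed.

Lemma b2n_inj b c : Nat.b2n b = Nat.b2n c <-> b = c.
Proof. destruct b, c; simpl; split; congruence. Qed.

Lemma player_code_inj i j : player_code i = player_code j <-> i = j.
Proof. destruct i, j; simpl; split; congruence. Qed.

Lemma n_le_pow2 n : n <= 2 ^ n - 1.
Proof. induction n; simpl; [lia|]. pose proof (pow2_pos n). lia. Qed.

Section Bridge.
Variables (G : game) (o a : baire).
Hypothesis Hturn : forall w, o (2 * word_code w) = player_code (turn G w).
Hypothesis Hcompl : forall m, o (2 * m + 1) = a m.

Lemma consistent_arith_iff who x y n :
  consistent_arith o (player_code who) (head_value x n) (word_value (prefix_of y n)) n <->
  consistent_upto G who (profile_of x) y n.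
Proof.
  apply bounded_forall_iff. intros i Hi.
  rewrite prefix_code_prefix_value, Hturn, testbit_prefix_value, player_code_inj by lia.
  unfold head_value, profile_of.
  rewrite testbit_prefix_value, b2n_inj by (apply word_code_prefix_lt; auto). tauto.
Qed.

Lemma leaves_arith_iff y n : leaves_arith o (word_value (prefix_of y n)) n <-> leaves_by a y n.
Proof.
  apply bounded_exists_iff. intros m _. rewrite Hcompl.
  apply bounded_exists_iff. intros i Hi. rewrite prefix_code_prefix_value by lia. tauto.
Qed.

Lemma refuted_arith_iff x n :
  refuted_arith o (head_value x n) n <-> refuted_by G a (profile_of x) n.
Proof.
  split.
  - intros [u [Hu [Hc Hl]]]. exists (testbit u).
    rewrite <- (prefix_value_testbit u n Hu) in Hc, Hl.
    rewrite <- consistent_arith_iff, <- leaves_arith_iff. auto.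
  - intros [y [Hc Hl]]. exists (word_value (prefix_of y n)).
    rewrite (consistent_arith_iff P1), leaves_arith_iff. auto using prefix_value_lt.
Qed.

Lemma forces_arith_iff x n :
  forces_arith o (head_value x n) n <-> forces_exit G a (profile_of x) n.
Proof.
  split.
  - intros H y Hc. rewrite <- leaves_arith_iff. apply H; [apply prefix_value_lt|].
    apply (consistent_arith_iff P2). auto.
  - intros H u Hu Hc. rewrite <- (prefix_value_testbit u n Hu) in Hc |- *.
    rewrite leaves_arith_iff. apply H. apply (consistent_arith_iff P2). auto.
Qed.

Lemma all_refuted_arith_iff n : all_refuted_arith o n <-> all_refuted G a n.
Proof.
  split.
  - intros H s. rewrite <- (profile_of_seq_of_profile s), <- refuted_arith_iff.
    apply H, head_value_lt.
  - intros H v Hv. rewrite <- (head_value_testbit v n Hv), refuted_arith_iff. apply H.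
Qed.

Lemma bad_arith_iff x n : bad_arith o n (head_value x n) <-> bad G a x n.
Proof.
  unfold bad_arith, bad. rewrite all_refuted_arith_iff, refuted_arith_iff, forces_arith_iff.
  tauto.
Qed.

Lemma bad_word_name_iff x :
  (exists m w, bad_word_name o m = S (word_code w) /\ is_prefix w x) <->
  exists n, bad G a x n.
Proof.
  split.
  - intros [m [w [Hm Hp]]]. apply bad_word_name_spec in Hm as [Hb <-].
    destruct Hb as [n [_ [v [Hv [E Hb]]]]]. rewrite word_code_value in E.
    apply word_code_inj_length in E as [Ew Ev]; [|apply word_value_lt|auto].
    exists n. rewrite <- bad_arith_iff. unfold head_value.
    apply is_prefix_iff in Hp. rewrite <- Ew, Hp, Ev. auto.
  - intros [n Hn]. rewrite <- bad_arith_iff in Hn.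
    exists (word_code (prefix_of x (2 ^ n - 1))), (prefix_of x (2 ^ n - 1)).
    split; [|apply is_prefix_prefix_of]. apply bad_word_name_spec. split; auto.
    rewrite word_code_value, length_prefix_of.
    exists n. split; [pose proof (n_le_pow2 n); pose proof (n_le_pow2 (2 ^ n - 1)); lia|].
    exists (head_value x n). auto using head_value_lt.
Qed.
End Bridge.

Fixpoint subst_oracle (d : code) (c : code) : code :=
  match c with
  | COracle => CComp d [CProj 0]
  | CComp f gs => CComp (subst_oracle d f) (map (subst_oracle d) gs)
  | CPrec f g => CPrec (subst_oracle d f) (subst_oracle d g)
  | CMin f => CMin (subst_oracle d f)
  | c => c
  end.

Section SubstOracle.
Variables (o q : baire) (d : code).
Hypothesis Hd : forall m, eval o d [m] (q m).

Fixpoint eval_subst_oracle c xs v (H : eval q c xs v) {struct H} :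
  eval o (subst_oracle d c) xs v
with evals_subst_oracle gs xs ys (H : evals q gs xs ys) {struct H} :
  evals o (map (subst_oracle d) gs) xs ys.
Proof.
  - destruct H; simpl.
    + constructor.
    + constructor.
    + constructor; auto.
    + repeat econstructor. apply Hd.
    + econstructor; [apply evals_subst_oracle|apply eval_subst_oracle]; eauto.
    + constructor. apply eval_subst_oracle; auto.
    + econstructor; [exact (eval_subst_oracle _ _ _ H)|apply eval_subst_oracle, H0].
    + constructor; [apply eval_subst_oracle; auto|].
      intros m Hm. destruct (H0 m Hm) as [k Hk]. exists k. apply eval_subst_oracle, Hk.
  - destruct H; simpl; constructor; [apply eval_subst_oracle|apply evals_subst_oracle]; auto.
Qed.
End SubstOracle.

Lemma computable_ext (F F' : baire -> baire -> Prop) :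
  (forall p r, F p r <-> F' p r) -> computable F -> computable F'.
Proof.
  intros E [sF [c Hc]]. split.
  - intros p r1 r2 H1 H2. apply (sF p); apply E; auto.
  - exists c. intros p r H. apply Hc, E, H.
Qed.

Lemma computable_compose F G : computable F -> computable G ->
  computable (fun p r => exists q, F p q /\ G q r).
Proof.
  intros [sF [cF eF]] [sG [cG eG]]. split.
  - intros p r1 r2 [q [A1 B1]] [q' [A2 B2]].
    rewrite (sF p q q') in B1 by auto. eauto.
  - exists (subst_oracle cF cG). intros p r [q [Hq Hr]] n.
    apply eval_subst_oracle with q; auto.
Qed.

Definition pair_code (c d : code) : code :=
  CComp (compile 3 (EAdd (EMul (ENot (EVar 0)) (EVar 1)) (EMul (EVar 0) (EVar 2))))
    [compile 1 (EOdd (EVar 0));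
     CComp c [compile 1 (EDiv2 (EVar 0))];
     CComp d [compile 1 (EDiv2 (EVar 0))]].

Lemma eval_pair_code o c d (p q : baire) :
  (forall m, eval o c [m] (p m)) -> (forall m, eval o d [m] (q m)) ->
  forall n, eval o (pair_code c d) [n] (pairB p q n).
Proof.
  intros Hc Hd n.
  pose proof (compile_correct (EOdd (EVar 0)) o [n]) as Hodd.
  pose proof (compile_correct (EDiv2 (EVar 0)) o [n]) as Hdiv2.
  rewrite peval_EOdd in Hodd. rewrite peval_EDiv2 in Hdiv2.
  econstructor.
  { constructor; [exact Hodd|].
    constructor; [econstructor; [constructor; [exact Hdiv2|constructor]|apply Hc]|].
    constructor; [econstructor; [constructor; [exact Hdiv2|constructor]|apply Hd]|].
    constructor. }
  set (sel := EAdd (EMul (ENot (EVar 0)) (EVar 1)) (EMul (EVar 0) (EVar 2))).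
  set (env := [Nat.b2n (Nat.odd n); p (Nat.div2 n); q (Nat.div2 n)]).
  replace (pairB p q n) with (peval o sel env); [apply (compile_correct sel o env)|].
  unfold sel, env, ENot, pairB. peval_simpl. simpl.
  rewrite <- Nat.negb_odd. destruct (Nat.odd n); simpl; lia.
Qed.

Lemma computable_pair F G : computable F -> computable G ->
  computable (fun p r => exists q s, F p q /\ G p s /\ r = pairB q s).
Proof.
  intros [sF [cF eF]] [sG [cG eG]]. split.
  - intros p r1 r2 [q [s [A1 [B1 ->]]]] [q' [s' [A2 [B2 ->]]]].
    f_equal; [apply (sF p)|apply (sG p)]; auto.
  - exists (pair_code cF cG). intros p r [q [s [Hq [Hs ->]]]].
    apply eval_pair_code; auto.
Qed.

Definition even_part (o : baire) : baire := fun n => o (2 * n).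
Definition odd_part (o : baire) : baire := fun n => o (2 * n + 1).

Lemma pairB_even p s n : pairB p s (2 * n) = p n.
Proof. unfold pairB. rewrite Nat.even_mul, Nat.div2_double. reflexivity. Qed.

Lemma pairB_odd p s n : pairB p s (2 * n + 1) = s n.
Proof.
  unfold pairB. rewrite Nat.add_comm, Nat.even_add_mul_2, Nat.add_comm, Nat.div2_odd'.
  reflexivity.
Qed.

Lemma even_part_pairB p s : even_part (pairB p s) = p.
Proof. apply functional_extensionality. intro n. apply pairB_even. Qed.

Lemma odd_part_pairB p s : odd_part (pairB p s) = s.
Proof. apply functional_extensionality. intro n. apply pairB_odd. Qed.

Lemma computable_even_part : computable (fun o r => r = even_part o).
Proof.
  apply computable_pexp with (EOra (EMul (ENat 2) (EVar 0))).
  intros. peval_simpl. reflexivity.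
Qed.

Lemma computable_odd_part : computable (fun o r => r = odd_part o).
Proof.
  apply computable_pexp with (EOra (EAdd (EMul (ENat 2) (EVar 0)) (ENat 1))).
  intros. peval_simpl. reflexivity.
Qed.

Lemma realizes_impl X Y (f : mv X Y) (F F' : baire -> baire -> Prop) :
  realizes X Y f F -> (forall p r, F p r -> F' p r) -> realizes X Y f F'.
Proof. intros H Hm p x Hp Hd. destruct (H p x Hp Hd) as [q [Hq Hy]]. eauto. Qed.

Lemma W_le_trans X Y (f : mv X Y) X' Y' (g : mv X' Y') X'' Y'' (h : mv X'' Y'') :
  W_le X Y f X' Y' g -> W_le X' Y' g X'' Y'' h -> W_le X Y f X'' Y'' h.
Proof.
  intros [K1 [H1 [cK1 [cH1 R1]]]] [K2 [H2 [cK2 [cH2 R2]]]].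
  exists (fun o r => exists q s, H1 (even_part o) q /\ K2 (pairB q (odd_part o)) s /\
                                K1 (pairB (even_part o) s) r).
  exists (fun p q3 => exists q, H1 p q /\ H2 q q3).
  split; [|split; [apply computable_compose; auto|]].
  - eapply computable_ext; [|apply computable_compose; [|exact cK1];
      apply computable_pair; [apply computable_even_part|];
      apply computable_compose; [|exact cK2]; apply computable_pair;
      [apply computable_compose; [apply computable_even_part|exact cH1]
      |apply computable_odd_part]].
    intros o r. split.
    + intros [q0 [[a0 [s [-> [[c [[d [e [[f0 [-> Hd]] [-> ->]]]] Hs]] ->]]]] Hr]]. eauto 10.
    + intros [q [s [Hq [Hs Hr]]]]. eauto 20.
  - intros Gr sG RG.
    set (G' := fun q s => exists q2 s2, H2 q q2 /\ Gr q2 s2 /\ K2 (pairB q s2) s).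
    assert (sG' : single_valued G').
    { destruct cH2 as [sH2 _], cK2 as [sK2 _].
      intros q s1 s2 [q2 [t2 [A1 [B1 C1]]]] [q2' [t2' [A2 [B2 C2]]]].
      replace q2' with q2 in B2 by (apply (sH2 q); auto).
      replace t2' with t2 in C2 by (apply (sG q2); auto). eauto. }
    eapply realizes_impl; [exact (R1 G' sG' (R2 Gr sG RG))|].
    intros p r [q [s [A1 [[q2 [s2 [B1 [C1 D1]]]] E1]]]].
    exists q2, s2. split; [eauto|]. split; auto.
    exists q, s. rewrite even_part_pairB, odd_part_pairB. auto.
Qed.

Lemma computable_id : computable (fun p q => q = p).
Proof. apply computable_pexp with (EOra (EVar 0)). reflexivity. Qed.

Lemma FindWS_le_Det : W_le ClosedGames Profiles FindWS_A ClosedGames Profiles Det_A.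
Proof.
  exists (fun o r => r = odd_part o), (fun p q => q = p).
  split; [apply computable_odd_part|split; [apply computable_id|]].
  intros Gr sG RG p x Hp [y [Hw Hn]].
  destruct (RG p x Hp (ex_intro _ y Hn)) as [s [Hs [y' [Hy' Hn']]]].
  exists (odd_part (pairB p s)). split; [eauto|].
  rewrite odd_part_pairB. exists y'. split; [exact Hy'|split; [exact Hw|exact Hn']].
Qed.

Lemma consistent_upto_local G who x x' y n :
  prefix_of x (2 ^ n - 1) = prefix_of x' (2 ^ n - 1) ->
  consistent_upto G who (profile_of x) y n -> consistent_upto G who (profile_of x') y n.
Proof.
  intros E Hc i Hi Ht. unfold profile_of.
  rewrite <- (nth_prefix_of x' (2 ^ n - 1)), <- E, nth_prefix_of
    by (apply word_code_prefix_lt; auto).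
  apply Hc; auto.
Qed.

Lemma bad_local G a n x x' : prefix_of x (2 ^ n - 1) = prefix_of x' (2 ^ n - 1) ->
  bad G a x n -> bad G a x' n.
Proof.
  intros E [[Hna [y [Hc Hl]]]|[Ha Hf]]; [left|right]; split; auto.
  - exists y. split; auto. eapply consistent_upto_local; eauto.
  - intros Hf'. apply Hf. intros y Hc. apply Hf'.
    eapply consistent_upto_local; eauto.
Qed.

Lemma exists_never_bad G a : exists x, forall n, ~ bad G a x n.
Proof.
  apply (cantor_compactness (fun n x => ~ bad G a x n) (fun n => 2 ^ n - 1)).
  - intros n x x' E Hx Hx'. apply Hx. apply (bad_local G a n x' x); auto.
  - apply exists_never_bad_upto.
Qed.

Lemma names_closed_never_bad G t a :
  (forall w, t (word_code w) = player_code (turn G w)) ->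
  names_closed (bad_word_name (pairB t a)) (fun x => forall n, ~ bad G a x n).
Proof.
  intros Ht x. rewrite (bad_word_name_iff G (pairB t a) a).
  - split.
    + intro H. apply NNPP. intro Hn. apply H. intros n Hb. exact (Hn (ex_intro _ n Hb)).
    + intros [n Hb] H. exact (H n Hb).
  - intro w. rewrite pairB_even. apply Ht.
  - apply pairB_odd.
Qed.

Lemma Det_le_closed_choice : W_le ClosedGames Profiles Det_A ClosedSets Cantor closed_choice.
Proof.
  exists (fun o r => r = odd_part o), (fun p q => q = bad_word_name p).
  split; [apply computable_odd_part|split].
  - apply computable_pexp with EBadWordName. reflexivity.
  - intros Gr sG RG p Gm [t [a [-> [Ht Ha]]]] _.
    destruct (RG _ _ (names_closed_never_bad Gm t a Ht) (exists_never_bad Gm a))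
      as [s [Hs [y [Hy Hnb]]]].
    exists (odd_part (pairB (pairB t a) s)). split; [eauto|].
    rewrite odd_part_pairB. exists (profile_of y). split.
    + intro w. apply Hy.
    + apply nash_of_never_bad with a; auto.
Qed.

Definition one_player_game (A : (nat -> bool) -> Prop) : game :=
  {| turn := fun _ => P1; win1 := A |}.

Lemma computable_one_player_game_name : computable (fun p q => q = pairB (fun _ => 1) p).
Proof.
  pose proof (computable_pexp (fun _ _ => 1) (ENat 1) (fun o n => eq_sym (peval_ENat o 1 [n])))
    as Hone.
  eapply computable_ext; [|exact (computable_pair _ _ Hone computable_id)].
  intros p r. split; [intros [q [s [-> [-> ->]]]]; reflexivity|].
  intros ->. exists (fun _ => 1), p. auto.
Qed.

Lemma nash_one_player_game A x0 s : A x0 ->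
  nash (one_player_game A) s -> A (play (fun _ w => s w)).
Proof.
  intros Hx0 [H1|H2].
  - apply H1. intros n _. rewrite prefix_of_play. reflexivity.
  - exfalso. apply (H2 x0); [intros n Hn; discriminate|exact Hx0].
Qed.

(* The profile is read off the odd part of [o]; [play_value o n] is the word value of
   the first [n] moves of the play it induces. *)
Definition play_value (o : baire) (n : nat) : nat :=
  prim_rec 0 (fun i acc => acc + o (2 * (2 ^ i - 1 + acc) + 1) * 2 ^ i) n.

Definition play_move (o : baire) (n : nat) : nat := o (2 * (2 ^ n - 1 + play_value o n) + 1).

Definition EPlayMove :=
  let code_at acc := EAdd (ESub (EPow2 (EVar 0)) (ENat 1)) acc in
  let bit_at acc := EOra (EAdd (EMul (ENat 2) (code_at acc)) (ENat 1)) in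
  bit_at (ERec (EVar 0) EZero (EAdd (EVar 1) (EMul (bit_at (EVar 1)) (EPow2 (EVar 0))))).

Lemma computable_play_move : computable (fun o r => r = play_move o).
Proof.
  apply computable_pexp with EPlayMove. intros o n.
  unfold EPlayMove, play_move, play_value. peval_simpl. rewrite peval_ERec.
  do 4 f_equal. apply prim_rec_ext. intros i acc. peval_simpl. reflexivity.
Qed.

Lemma play_move_pairB p s prof : (forall w, s (word_code w) = bit (prof w)) ->
  forall n, play_move (pairB p s) n = bit (play (fun _ w => prof w) n).
Proof.
  intros Hs. set (f := fun (_ : nat) (w : list bool) => prof w).
  assert (Hmove : forall n, play_value (pairB p s) n = word_value (play_prefix f n) ->
                            play_move (pairB p s) n = bit (play f n)).
  { intros n E. unfold play_move. rewrite E, pairB_odd.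
    rewrite <- (length_play_prefix f n) at 1. rewrite <- word_code_value. apply Hs. }
  enough (Hv : forall n, play_value (pairB p s) n = word_value (play_prefix f n))
    by (intro n; apply Hmove, Hv).
  induction n as [|n IH]; [reflexivity|].
  change (play_value (pairB p s) (S n))
    with (play_value (pairB p s) n + play_move (pairB p s) n * 2 ^ n).
  rewrite Hmove, IH by exact IH. cbn [play_prefix].
  rewrite word_value_app, length_play_prefix. unfold play.
  destruct (f n (play_prefix f n)); reflexivity.
Qed.

Lemma closed_choice_le_FindWS :
  W_le ClosedSets Cantor closed_choice ClosedGames Profiles FindWS_A.
Proof.
  exists (fun o r => r = play_move o), (fun p q => q = pairB (fun _ => 1) p).
  split; [apply computable_play_move|split; [apply computable_one_player_game_name|]].
  intros Gr sG RG p A Hp [x0 Hx0].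
  assert (Hname : names_game (pairB (fun _ => 1) p) (one_player_game A))
    by (exists (fun _ => 1), p; auto).
  assert (Hwin : winning (one_player_game A) P1 (fun w => x0 (length w))).
  { intros y Hc. replace y with x0; [exact Hx0|].
    apply functional_extensionality. intro n.
    rewrite (Hc n eq_refl), length_prefix_of. reflexivity. }
  destruct (RG _ _ Hname (ex_intro _ _ (conj (ex_intro _ _ Hwin) (or_introl Hwin))))
    as [s [Hs [prof [Hprof [_ Hnash]]]]].
  exists (play_move (pairB p s)). split; [eauto|].
  exists (play (fun _ w => prof w)). split.
  - intro n. apply play_move_pairB, Hprof.
  - exact (nash_one_player_game A x0 prof Hx0 Hnash).
Qed.

Theorem theorem9 :
  W_eq ClosedGames Profiles FindWS_A ClosedGames Profiles Det_A /\
  W_eq ClosedGames Profiles Det_A ClosedSets Cantor closed_choice.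
Proof.
  pose proof (W_le_trans _ _ _ _ _ _ _ _ _ Det_le_closed_choice closed_choice_le_FindWS)
    as Det_le_FindWS.
  split; split.
  - exact FindWS_le_Det.
  - exact Det_le_FindWS.
  - exact Det_le_closed_choice.
  - exact (W_le_trans _ _ _ _ _ _ _ _ _ closed_choice_le_FindWS FindWS_le_Det).
Qed.
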